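(* Assume $\alpha\neq1$ and $\mu\neq0$. Take $c_k=1$ and $t_k=k$ for all $k\ge0$, and choose the constants $a_k$ recursively by $a_k=\exp(\mu_k)$ for $k\ge1$, where $\mu_k$ is the location parameter of $\log Z_k$ (which depends only on $a_1,\dots,a_{k-1}$). Then for every $k\ge1$, $Z_k\le Y_k$ almost surely and $\log Z_k\sim\mathcal S(\alpha,\beta,\sigma_k,\mu_k)$ with $$\mu_k=\mu+\log\frac{e^{\mu k}-1}{e^{\mu}-1},\qquad \sigma_k^\alpha=\sigma^\alpha\left(1+\sum_{j=1}^{k-1}\left(1-\frac{e^{\mu j}-1}{e^{\mu k}-1}\right)^\alpha\right).$$
   Context: Stable laws: for $\alpha^*\in(0,2]$, $\beta^*\in[-1,1]$, $\sigma^*>0$, $\mu^*\in\mathbb R$, write $Z\sim\mathcal S(\alpha^*,\beta^*,\sigma^*,\mu^* )$ if the real random variable $Z$ has characteristic function $\mathbb E e^{i\theta Z}=\exp\{i\theta\mu^*-|\sigma^*\theta|^{\alpha^*}(1-i\beta^*\operatorname{sgn}(\theta)\tan\frac{\pi\alpha^*}{2})\}$ when $\alpha^*\neq1$, and $\mathbb E e^{i\theta Z}=\exp\{i\theta\mu^*-|\sigma^*\theta|(1+i\beta^*\frac{2}{\pi}\operatorname{sgn}(\theta)\log|\theta|)\}$ when $\alpha^*=1$. Wealth process: on a probability space $(\Omega,\mathcal F,\mathbb P)$, $X:[0,\infty)\times\Omega\to(0,\infty)$ is a process such that $\log X$ is a Lévy process (càdlàg paths, independent increments) with, for all $0\le s<t$,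 $\log\frac{X(t)}{X(s)}\sim\mathcal S(\alpha,\beta,\sigma(t-s)^{1/\alpha},\mu(t-s))$, where $\alpha\in(0,2]$, $\beta\in[-1,1]$, $\sigma>0$, $\mu\in\mathbb R$ are fixed. Regular investing: given times $0=t_0<t_1<\cdots$ and amounts $c_k>0$ invested at $t_k$, set $X_k=X(t_k)/X(t_{k-1})$ for $k\ge1$, and define the terminal wealth recursively by $Y_1=c_0X_1$, $Y_k=X_k(Y_{k-1}+c_{k-1})$ for $k\ge2$. Lower bound process: given constants $a_{k}>0$ ($k\ge1$), set $b_{k}=\frac{a_{k}}{a_{k}+c_{k}}$, $Z_1=Y_1$, and $Z_k=X_k(a_{k-1}+c_{k-1})\left(\frac{Z_{k-1}}{a_{k-1}}\right)^{b_{k-1}}$ for $k\ge2$. *)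

From HB Require Import structures.
From mathcomp Require Import all_boot all_order all_algebra.
From mathcomp Require Import all_classical all_reals all_analysis.
Set Implicit Arguments. Unset Strict Implicit. Unset Printing Implicit Defensive.
Import Order.TTheory GRing.Theory Num.Theory.
Import numFieldNormedType.Exports.
Local Open Scope classical_set_scope.
Local Open Scope ring_scope.

Section defs.
Context {d : measure_display} {T : measurableType d} {R : realType}.

Definition stable_cf_re (a b s m th : R) : R :=
  if a != 1 then expR (- (`|s * th| `^ a))
  else expR (- `|s * th|).
Definition stable_cf_im_arg (a b s m th : R) : R :=
  if a != 1 then th * m + (`|s * th| `^ a) * b * Num.sg th * tan (pi * a / 2)
  else th * m - `|s * th| * b * (2 / pi) * Num.sg th * ln `|th|.
(* E exp(i th Z) = exp(-|s th|^a) (cos A + i sin A), with A the imaginary part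
   of the exponent; we write the identity componentwise. *)
Definition stable_law (P : probability T R) (Z : T -> R) (a b s m : R) : Prop :=
  [/\ 0 < a <= 2, -1 <= b <= 1, 0 < s, measurable_fun setT Z &
   forall th : R,
     ('E_P[fun w => cos (th * Z w)] =
        (stable_cf_re a b s m th * cos (stable_cf_im_arg a b s m th))%:E)%E /\
     ('E_P[fun w => sin (th * Z w)] =
        (stable_cf_re a b s m th * sin (stable_cf_im_arg a b s m th))%:E)%E].

Definition mutually_independent (P : probability T R) (n : nat)
  (Z : nat -> T -> R) : Prop :=
  forall B : nat -> set R, (forall i, measurable (B i)) ->
    P [set w | forall i, (i < n)%N -> B i (Z i w)] =
    (\prod_(i < n) P (Z i @^-1` B i))%E.

Definition cadlag_paths (X : R -> T -> R) : Prop :=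
  (forall w t, 0 <= t -> (fun u => ln (X u w)) @ at_right t --> ln (X t w)) /\
  (forall w t, 0 < t ->
     exists l : R, (fun u => ln (X u w)) @ at_left t --> l).

Definition stable_wealth_process (P : probability T R) (X : R -> T -> R)
  (a b s m : R) : Prop :=
  [/\ (forall t, 0 <= t ->
         measurable_fun setT (X t) /\ forall w, 0 < X t w),
      (forall w, ln (X 0 w) = 0),
      cadlag_paths X,
      (forall (n : nat) (u : nat -> R), 0 <= u 0%N ->
          (forall i, (i < n)%N -> u i < u i.+1) ->
          mutually_independent P n
            (fun i w => ln (X (u i.+1) w) - ln (X (u i) w))) &
      (forall s' t, 0 <= s' -> s' < t ->
          stable_law P (fun w => ln (X t w / X s' w)) a b
            (s * (t - s') `^ a^-1) (m * (t - s')))].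

Definition gross_return (X : R -> T -> R) (t : nat -> R) (k : nat) : T -> R :=
  fun w => X (t k) w / X (t k.-1) w.

(* Terminal wealth Y_k (Y 0 := 0, so that Y_1 = c_0 X_1). *)
Fixpoint Ywealth (X : R -> T -> R) (t c : nat -> R) (k : nat) : T -> R :=
  match k with
  | 0 => fun _ => 0
  | k'.+1 => fun w => gross_return X t k'.+1 w * (Ywealth X t c k' w + c k')
  end.

Definition bcoef (a c : nat -> R) (k : nat) : R := a k / (a k + c k).

(* Lower bound process Z_k (Z 0 := 0 is unused). *)
Fixpoint Zlow (X : R -> T -> R) (t c a : nat -> R) (k : nat) : T -> R :=
  match k with
  | 0 => fun _ => 0
  | 1 => Ywealth X t c 1
  | (k'.+1 as k1).+1 => fun w =>
      gross_return X t k1.+1 w * (a k1 + c k1) *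
      (Zlow X t c a k1 w / a k1) `^ bcoef a c k1
  end.

End defs.

From HB Require Import structures.
From mathcomp Require Import all_boot all_order all_algebra.
From mathcomp Require Import all_classical all_reals all_analysis.
From mathcomp Require Import measurable_realfun lra ring.
Import Order.TTheory GRing.Theory Num.Theory.
Import numFieldNormedType.Exports.
Local Open Scope classical_set_scope.
Local Open Scope ring_scope.
Set Implicit Arguments. Unset Strict Implicit. Unset Printing Implicit Defensive.

(* With t_k = k and c_k = 1 the recursion reads
     log Z_(k+1) = L_k + log (a_k + 1) + b_k (log Z_k - log a_k),
   L_k = log (X(k+1) / X(k)), so log Z_k is an affine combination of the
   i.i.d. stable log-returns L_j in which each step multiplies the earlier
   weights by b_k = a_k / (a_k + 1).  For a_k = exp mu_k this gives
   log Z_k = mu_k + sum_j w_kj (L_j - mu) with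
   w_kj = 1 - (e^(mu (k-j-1)) - 1) / (e^(mu k) - 1) > 0.  By independence the
   characteristic function of such a combination is the product of those of
   the summands, which for alpha <> 1 is again stable with scale^alpha
   sigma^alpha sum_j w_kj^alpha; factorization of E[prod_i f_i(L_i)] for
   bounded measurable f_i follows from the product rule on events by uniform
   approximation with simple functions.  Finally Z_k <= Y_k by induction, using
   the weighted AM-GM inequality (a + 1) (z / a)^(a / (a + 1)) <= z + 1. *)

Section bounded_measurable.
Context {d : measure_display} {T : measurableType d} {R : realType}.

Definition bounded_measurable (f : T -> R) :=
  measurable_fun setT f /\ exists M, forall x, `|f x| <= M.

Lemma bounded_measurable_cst (c : R) : bounded_measurable (fun=> c).
Proof. by split => //; exists `|c|. Qed.

Lemma bounded_measurableD (f g : T -> R) :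
  bounded_measurable f -> bounded_measurable g ->
  bounded_measurable (fun x => f x + g x).
Proof.
move=> [mf [M hM]] [mg [N hN]]; split; first exact: measurable_funD.
by exists (M + N) => x; apply: le_trans (ler_normD _ _) (lerD (hM x) (hN x)).
Qed.

Lemma bounded_measurableM (f g : T -> R) :
  bounded_measurable f -> bounded_measurable g ->
  bounded_measurable (fun x => f x * g x).
Proof.
move=> [mf [M hM]] [mg [N hN]]; split; first exact: measurable_funM.
by exists (M * N) => x; rewrite normrM ler_pM.
Qed.

Lemma bounded_measurableB (f g : T -> R) :
  bounded_measurable f -> bounded_measurable g ->
  bounded_measurable (fun x => f x - g x).
Proof.
move=> bf bg; apply: bounded_measurableD => //.
under [X in bounded_measurable X]eq_fun do rewrite -mulN1r.
exact/bounded_measurableM/bg/bounded_measurable_cst.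
Qed.

Lemma bounded_measurable_sum (I : Type) (s : seq I) (F : I -> T -> R) :
  (forall i, bounded_measurable (F i)) ->
  bounded_measurable (fun x => \sum_(i <- s) F i x).
Proof.
move=> hF; elim: s => [|i s IH].
  under [X in bounded_measurable X]eq_fun do rewrite big_nil.
  exact: bounded_measurable_cst.
under [X in bounded_measurable X]eq_fun do rewrite big_cons.
exact: bounded_measurableD.
Qed.

Lemma bounded_measurable_prod (I : Type) (s : seq I) (Q : pred I)
    (F : I -> T -> R) : (forall i, bounded_measurable (F i)) ->
  bounded_measurable (fun x => \prod_(i <- s | Q i) F i x).
Proof.
move=> hF; elim: s => [|i s IH].
  under [X in bounded_measurable X]eq_fun do rewrite big_nil.
  exact: bounded_measurable_cst.
under [X in bounded_measurable X]eq_fun do rewrite big_cons.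
by case: (Q i) => //; exact: bounded_measurableM.
Qed.

Lemma bounded_measurable_indic (B : set T) :
  measurable B -> bounded_measurable (\1_B : T -> R).
Proof.
move=> mB; split; first exact: measurable_indic.
by exists 1 => x; rewrite indicE; case: (x \in B); rewrite ?normr1 ?normr0.
Qed.

End bounded_measurable.

Lemma bounded_measurable_comp {d d'} {T : measurableType d}
    {T' : measurableType d'} {R : realType} (g : T' -> R)
    (Z : T -> T') : bounded_measurable g -> measurable_fun setT Z ->
  bounded_measurable (fun x => g (Z x)).
Proof.
by move=> [mg [M hM]] mZ; split; [exact: measurableT_comp | exists M].
Qed.

Lemma bounded_measurable_cosM (R : realType) (c : R) :
  bounded_measurable (fun y : R => cos (c * y)).
Proof.
split; last by exists 1 => y; rewrite ler_norml cos_geN1 cos_le1.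
apply: measurableT_comp; last exact: measurable_funM.
by apply: continuous_measurable_fun; exact: continuous_cos.
Qed.

Lemma bounded_measurable_sinM (R : realType) (c : R) :
  bounded_measurable (fun y : R => sin (c * y)).
Proof.
split; last by exists 1 => y; rewrite ler_norml sin_geN1 sin_le1.
apply: measurableT_comp; last exact: measurable_funM.
by apply: continuous_measurable_fun; exact: continuous_sin.
Qed.

Section bounded_integration.
Context {d : measure_display} {T : measurableType d} {R : realType}.
Variable P : probability T R.
Local Notation mean := (Rintegral P setT).

Lemma bounded_measurable_integrable (f : T -> R) :
  bounded_measurable f -> P.-integrable setT (EFin \o f).
Proof.
move=> [mf [M hM]]; apply: measurable_bounded_integrable => //.
  exact: (le_lt_trans (probability_le1 _ measurableT) (ltry _)).
exists M; split; first by rewrite num_real.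
by move=> x Mx z _; apply: le_trans (hM z) _; exact: ltW.
Qed.

Lemma expectation_bounded (f : T -> R) :
  bounded_measurable f -> ('E_P[f] = (mean f)%:E)%E.
Proof.
move=> bf; rewrite unlock /Rintegral fineK//.
by apply: integrable_fin_num => //; exact: bounded_measurable_integrable.
Qed.

Lemma meanD (f g : T -> R) : bounded_measurable f -> bounded_measurable g ->
  mean (fun x => f x + g x) = mean f + mean g.
Proof. by move=> bf bg; rewrite RintegralD//; exact: bounded_measurable_integrable. Qed.

Lemma meanB (f g : T -> R) : bounded_measurable f -> bounded_measurable g ->
  mean (fun x => f x - g x) = mean f - mean g.
Proof. by move=> bf bg; rewrite RintegralB//; exact: bounded_measurable_integrable. Qed.

Lemma meanZl (c : R) (f : T -> R) : bounded_measurable f ->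
  mean (fun x => c * f x) = c * mean f.
Proof. by move=> bf; rewrite RintegralZl//; exact: bounded_measurable_integrable. Qed.

Lemma mean_cst (c : R) : mean (fun=> c) = c.
Proof.
have P1 : fine (P setT) = 1 :> R by rewrite probability_setT.
by rewrite Rintegral_cst// P1 mulr1.
Qed.

Lemma mean_indic (A : set T) : measurable A -> mean (\1_A) = fine (P A).
Proof. by move=> mA; rewrite /Rintegral integral_indic// setIT. Qed.

Lemma mean_indic_comp {d'} {T' : measurableType d'} (Z : T -> T') (B : set T') :
  measurable_fun setT Z -> measurable B ->
  mean (fun w => \1_B (Z w)) = fine (P (Z @^-1` B)).
Proof.
move=> mZ mB; rewrite -mean_indic; last first.
  by rewrite -[_ @^-1` _]setTI; exact: mZ.
apply: eq_Rintegral => w _; rewrite !indicE.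
by congr (_%:R); apply/idP/idP; rewrite !inE.
Qed.

Lemma norm_mean_le (f : T -> R) (M : R) : bounded_measurable f ->
  (forall x, `|f x| <= M) -> `|mean f| <= M.
Proof.
move=> bf hM; apply: (le_trans (le_normr_Rintegral measurableT
  (bounded_measurable_integrable bf))).
rewrite -[X in _ <= X](mean_cst M); apply: le_Rintegral => //.
- apply: bounded_measurable_integrable; split; first exact: measurableT_comp bf.1.
  by exists M => x; rewrite normr_id.
- exact/bounded_measurable_integrable/bounded_measurable_cst.
Qed.

End bounded_integration.

Lemma simple_approx (R : realType) (g : R -> R) (eps : R) :
  bounded_measurable g -> 0 < eps ->
  exists N (r : nat -> R) (B : nat -> set R), (forall i, measurable (B i)) /\
    forall x, `|g x - \sum_(i < N) r i * \1_(B i) x| <= eps.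
Proof.
move=> [mg [M hM]] eps0.
(* Cut [-M, M] into K + K bins of width eps; bin i is read off g x / eps + K. *)
pose K := (Num.truncn (M / eps)).+1.
have MK : M / eps < K%:R by exact: truncnS_gt.
pose gp x := g x / eps + K%:R.
pose B i := gp @^-1` `[i%:R, i.+1%:R[.
have mB i : measurable (B i).
  rewrite /B -[_ @^-1` _]setTI; apply: measurable_funD => //.
  exact: measurable_funM.
exists (K + K)%N, (fun i => (i%:R - K%:R) * eps), B; split => // x.
have gp0 : 0 <= gp x.
  have : - M / eps <= g x / eps.
    rewrite ler_pM2r ?invr_gt0// lerNl; apply: le_trans (hM x).
    by rewrite -normrN ler_norm.
  rewrite /gp mulNr; lra.
pose t := Num.truncn (gp x).
have [t_le lt_t] := andP (truncn_itv gp0).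
have tK : (t < K + K)%N.
  rewrite truncn_lt_nat// natrD /gp ltrD2r; apply: le_lt_trans MK.
  by rewrite ler_pM2r ?invr_gt0//; apply: le_trans (hM x); exact: ler_norm.
rewrite (bigD1 (Ordinal tK)) //= big1 ?addr0 => [|i ti]; last first.
  rewrite indicE memNset ?mulr0// /B /= in_itv /= => /(truncn_def (n := i)) it.
  by move: ti; rewrite -val_eqE /= /t it eqxx.
rewrite indicE mem_set /B /= ?in_itv /= ?t_le// mulr1.
have -> : g x = (gp x - K%:R) * eps by rewrite /gp addrK divfK ?gt_eqF.
rewrite -mulrBl (_ : _ - _ - _ = gp x - t%:R); last by ring.
rewrite normrM (gtr0_norm eps0) ger0_norm ?subr_ge0// ler_piMl ?ltW//.
by move: lt_t; rewrite -natr1; lra.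
Qed.

Section indicator_extension.
Context {d : measure_display} {T : measurableType d} {R : realType}.
Variable P : probability T R.
Local Notation mean := (Rintegral P setT).
Variables (Z H : T -> R) (c : R).
Hypotheses (mZ : measurable_fun setT Z) (bH : bounded_measurable H).
Hypothesis mean_indicM : forall B, measurable B ->
  mean (fun w => \1_B (Z w) * H w) = c * fine (P (Z @^-1` B)).

Lemma bounded_measurable_simple N (r : nat -> R) (B : nat -> set R) :
  (forall i, measurable (B i)) ->
  bounded_measurable (fun w => \sum_(i < N) r i * \1_(B i) (Z w)).
Proof.
move=> mB; apply: bounded_measurable_sum => i.
apply: bounded_measurableM; first exact: bounded_measurable_cst.
exact: bounded_measurable_comp (bounded_measurable_indic (mB i)) mZ.
Qed.

Lemma mean_simpleM N (r : nat -> R) (B : nat -> set R) :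
  (forall i, measurable (B i)) ->
  mean (fun w => (\sum_(i < N) r i * \1_(B i) (Z w)) * H w) =
  c * mean (fun w => \sum_(i < N) r i * \1_(B i) (Z w)).
Proof.
move=> mB.
have bI i : bounded_measurable (fun w => \1_(B i) (Z w) : R).
  exact: bounded_measurable_comp (bounded_measurable_indic (mB i)) mZ.
have brI i : bounded_measurable (fun w => r i * \1_(B i) (Z w)).
  exact/bounded_measurableM/bI/bounded_measurable_cst.
elim: N => [|N IH].
  under eq_Rintegral do rewrite big_ord0 mul0r.
  under [in RHS]eq_Rintegral do rewrite big_ord0.
  by rewrite mean_cst mulr0.
have bS := bounded_measurable_simple N r mB.
have bSH := bounded_measurableM bS bH.
have bIH := bounded_measurableM (bI N) bH.
have brIH := bounded_measurableM (bounded_measurable_cst (r N)) bIH.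
under eq_Rintegral do rewrite big_ord_recr /= mulrDl -mulrA.
under [in RHS]eq_Rintegral do rewrite big_ord_recr /=.
rewrite !meanD ?meanZl//.
by rewrite IH mean_indicM// mean_indic_comp// mulrDr mulrCA.
Qed.

Lemma mean_bounded_compM (g : R -> R) : bounded_measurable g ->
  mean (fun w => g (Z w) * H w) = c * mean (fun w => g (Z w)).
Proof.
(* With h a simple function uniformly eps-close to g, the error is at most
   (`|KH| + `|c|) eps, KH a bound on H. *)
move=> bg; have [_ [KH hKH]] := bH.
have bgZ : bounded_measurable (fun w => g (Z w)).
  exact: bounded_measurable_comp.
apply/eqP; rewrite -subr_eq0 -normr_le0; apply/ler_addgt0Pr => e e0.
rewrite add0r; set C := `|KH| + `|c| + 1.
have C0 : 0 < C by rewrite /C; have := normr_ge0 KH; have := normr_ge0 c; lra.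
have [N [r [B [mB hB]]]] := simple_approx bg (divr_gt0 e0 C0).
pose h x := \sum_(i < N) r i * \1_(B i) x.
have bh : bounded_measurable (fun w => h (Z w)).
  exact: bounded_measurable_simple.
have bgh : bounded_measurable (fun w => g (Z w) - h (Z w)).
  exact: bounded_measurableB.
have bgH := bounded_measurableM bgZ bH.
have bhH := bounded_measurableM bh bH.
have -> : mean (fun w => g (Z w) * H w) - c * mean (fun w => g (Z w)) =
    mean (fun w => (g (Z w) - h (Z w)) * H w) -
    c * mean (fun w => g (Z w) - h (Z w)).
  under [in RHS]eq_Rintegral do rewrite mulrBl.
  by rewrite !meanB// mean_simpleM//; ring.
apply: (le_trans (ler_normB _ _)).
have -> : e = (`|KH| + `|c| + 1) * (e / C) by rewrite mulrC divfK ?gt_eqF.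
rewrite !mulrDl mul1r -addrA; apply: lerD.
  apply: norm_mean_le; first exact: bounded_measurableM.
  move=> w; rewrite normrM mulrC; apply: ler_pM => //.
  exact: le_trans (hKH w) (ler_norm KH).
rewrite normrM -[X in X <= _]addr0; apply: lerD; last exact/ltW/divr_gt0.
by apply: ler_wpM2l => //; exact: norm_mean_le.
Qed.

End indicator_extension.

Section independent_product.
Context {d : measure_display} {T : measurableType d} {R : realType}.
Variable P : probability T R.
Local Notation mean := (Rintegral P setT).
Variables (n : nat) (Z : nat -> T -> R).
Hypotheses (indep : mutually_independent P n Z)
  (mZ : forall i, measurable_fun setT (Z i)).

Lemma mean_prod_indic (B : nat -> set R) : (forall i, measurable (B i)) ->
  mean (fun w => \prod_(i < n) \1_(B i) (Z i w)) =
  \prod_(i < n) mean (fun w => \1_(B i) (Z i w)).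
Proof.
move=> mB; pose S := \bigcap_(i in [set k | (k < n)%N]) (Z i @^-1` B i).
have mZB i : measurable (Z i @^-1` B i) by rewrite -[_ @^-1` _]setTI; exact: mZ.
have -> : (fun w => \prod_(i < n) \1_(B i) (Z i w)) = \1_S :> (T -> R).
  apply/funext => w; rewrite indicE.
  have [inS|/existsNP[i /not_implyP[ilt nB]]] :=
    pselect (forall i, (i < n)%N -> B i (Z i w)).
    by rewrite mem_set//; apply: big1 => i _; rewrite indicE mem_set//; exact: inS.
  rewrite memNset; last by move=> /(_ i ilt).
  by rewrite (bigD1 (Ordinal ilt)) //= indicE memNset ?mul0r.
rewrite mean_indic; last exact: bigcap_measurableType.
have -> : P S = (\prod_(i < n) P (Z i @^-1` B i))%E by exact: indep.
have fin i : P (Z i @^-1` B i) \is a fin_num by rewrite fin_num_measure.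
under eq_bigr => i _ do rewrite -(fineK (fin i)).
by rewrite prodEFin /=; apply: eq_bigr => i _; rewrite mean_indic_comp.
Qed.

Lemma mean_prod_indep_indic_tail m : (m <= n)%N ->
  forall (f : nat -> R -> R) (B : nat -> set R), (forall i, measurable (B i)) ->
  (forall j, (j < m)%N -> bounded_measurable (f j)) ->
  (forall j, (m <= j)%N -> f j = \1_(B j)) ->
  mean (fun w => \prod_(i < n) f i (Z i w)) =
  \prod_(i < n) mean (fun w => f i (Z i w)).
Proof.
(* Induction on the number of general factors: the last one, f m, is split off
   with [mean_bounded_compM], H being the product of the other factors. *)
elim: m => [_ f B mB _ fB|m IH mn f B mB bf fB].
  under eq_Rintegral do under eq_bigr => i _ do rewrite fB//.
  by rewrite mean_prod_indic//; apply: eq_bigr => i _; rewrite fB.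
pose i0 := Ordinal mn.
have ne_m (i : 'I_n) : i != i0 -> (i == m :> nat) = false.
  by move=> ne; apply/negbTE; apply: contra ne => /eqP e; apply/eqP/val_inj.
pose H w := \prod_(i < n | i != i0) f i (Z i w).
pose c := \prod_(i < n | i != i0) mean (fun w => f i (Z i w)).
have bfj j : bounded_measurable (f j).
  have [/bf//|jm] := ltnP j m.+1.
  by rewrite (fB _ jm); exact: bounded_measurable_indic.
have bH : bounded_measurable H.
  by apply: bounded_measurable_prod => i; exact: bounded_measurable_comp.
have indicM B' : measurable B' ->
    mean (fun w => \1_B' (Z m w) * H w) = c * fine (P (Z m @^-1` B')).
  move=> mB'; pose f' j := if j == m then \1_B' else f j.
  have f'm : f' m = \1_B' by rewrite /f' eqxx.
  have f'E (i : 'I_n) : i != i0 -> f' i = f i by move=> /ne_m; rewrite /f' => ->.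
  have eL : mean (fun w => \prod_(i < n) f' i (Z i w)) =
      mean (fun w => \1_B' (Z m w) * H w).
    apply: eq_Rintegral => w _; rewrite (bigD1 i0)//= f'm; congr (_ * _).
    by apply: eq_bigr => i /f'E ->.
  have eR : \prod_(i < n) mean (fun w => f' i (Z i w)) =
      c * fine (P (Z m @^-1` B')).
    rewrite (bigD1 i0)//= f'm mean_indic_comp// mulrC; congr (_ * _).
    by apply: eq_bigr => i /f'E ->.
  rewrite -eL -eR.
  apply: (IH (ltnW mn) f' (fun j => if j == m then B' else B j)).
  - by move=> i; case: ifP.
  - by move=> j jm; rewrite /f' ltn_eqF//; apply: bf; exact: ltnW.
  - move=> j jm; rewrite /f'; case: eqP => // /eqP jnm; apply: fB.
    by rewrite ltn_neqAle eq_sym jnm.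
transitivity (mean (fun w => f m (Z m w) * H w)).
  by apply: eq_Rintegral => w _; rewrite (bigD1 i0).
by rewrite (mean_bounded_compM (mZ m) bH indicM (bfj m)) [RHS](bigD1 i0)// mulrC.
Qed.

Lemma mean_prod_indep (f : nat -> R -> R) :
  (forall j, bounded_measurable (f j)) ->
  mean (fun w => \prod_(i < n) f i (Z i w)) =
  \prod_(i < n) mean (fun w => f i (Z i w)).
Proof.
move=> bf; pose f' j := if (j < n)%N then f j else \1_setT.
transitivity (mean (fun w => \prod_(i < n) f' i (Z i w))).
  by apply: eq_Rintegral => w _; apply: eq_bigr => i _; rewrite /f' ltn_ord.
transitivity (\prod_(i < n) mean (fun w => f' i (Z i w))); last first.
  by apply: eq_bigr => i _; rewrite /f' ltn_ord.
apply: (mean_prod_indep_indic_tail (leqnn n) (f := f') (B := fun=> setT)) => // j.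
- by rewrite /f' => ->.
- by rewrite /f' ltnNge => ->.
Qed.

End independent_product.

Section weighted_sum_cf.
Context {d : measure_display} {T : measurableType d} {R : realType}.
Variable P : probability T R.
Local Notation mean := (Rintegral P setT).
Variables (n : nat) (L : nat -> T -> R) (c0 th : R) (wt : nat -> R).
Hypotheses (indep : mutually_independent P n L)
  (mL : forall i, measurable_fun setT (L i)).

Definition wsum m w := c0 + \sum_(j < m) wt j * L j w.

Definition cf_cos j := mean (fun w => cos (th * wt j * L j w)).
Definition cf_sin j := mean (fun w => sin (th * wt j * L j w)).

(* Real and imaginary parts of exp(i th c0) times the product of the
   characteristic functions of wt j * L j, j < m. *)
Fixpoint cf_prod m : R * R :=
  if m is m'.+1 then
    ((cf_prod m').1 * cf_cos m' - (cf_prod m').2 * cf_sin m',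
     (cf_prod m').1 * cf_sin m' + (cf_prod m').2 * cf_cos m')
  else (cos (th * c0), sin (th * c0)).

Lemma measurable_wsum m : measurable_fun setT (wsum m).
Proof.
apply: measurable_funD => //; apply: measurable_sum => j.
exact: measurable_funM.
Qed.

(* The tail factors let the induction absorb the next summand of wsum. *)
Definition cf_wsum_factorizes m := forall f : nat -> R -> R,
  (forall j, bounded_measurable (f j)) ->
  mean (fun w => cos (th * wsum m w) * \prod_(m <= j < n) f j (L j w)) =
    (cf_prod m).1 * \prod_(m <= j < n) mean (fun w => f j (L j w)) /\
  mean (fun w => sin (th * wsum m w) * \prod_(m <= j < n) f j (L j w)) =
    (cf_prod m).2 * \prod_(m <= j < n) mean (fun w => f j (L j w)).

Lemma cf_wsum_factorizes0 : cf_wsum_factorizes 0.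
Proof.
move=> f bf; have wsum0 w : wsum 0 w = c0 by rewrite /wsum big_ord0 addr0.
have bP : bounded_measurable (fun w => \prod_(i < n) f i (L i w)).
  by apply: bounded_measurable_prod => j; exact: bounded_measurable_comp.
under eq_Rintegral do rewrite wsum0 big_mkord.
under [X in _ /\ X = _]eq_Rintegral do rewrite wsum0 big_mkord.
by rewrite !meanZl// big_mkord (mean_prod_indep indep).
Qed.

Lemma cf_wsum_factorizes_cons m g f : (m < n)%N -> cf_wsum_factorizes m ->
  bounded_measurable g -> (forall j, bounded_measurable (f j)) ->
  let Pf := \prod_(m.+1 <= j < n) mean (fun w => f j (L j w)) in
  mean (fun w => cos (th * wsum m w) *
    (g (L m w) * \prod_(m.+1 <= j < n) f j (L j w))) =
    (cf_prod m).1 * (mean (fun w => g (L m w)) * Pf) /\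
  mean (fun w => sin (th * wsum m w) *
    (g (L m w) * \prod_(m.+1 <= j < n) f j (L j w))) =
    (cf_prod m).2 * (mean (fun w => g (L m w)) * Pf).
Proof.
move=> mn IH bg bf Pf; pose f1 j := if j == m then g else f j.
have bf1 j : bounded_measurable (f1 j) by rewrite /f1; case: ifP.
have e1 w : \prod_(m <= j < n) f1 j (L j w) =
    g (L m w) * \prod_(m.+1 <= j < n) f j (L j w).
  rewrite big_ltn// /f1 eqxx; congr (_ * _); apply: eq_big_nat => j /andP[jm _].
  by rewrite gtn_eqF.
have e2 : \prod_(m <= j < n) mean (fun w => f1 j (L j w)) =
    mean (fun w => g (L m w)) * Pf.
  rewrite big_ltn// /f1 eqxx; congr (_ * _); apply: eq_big_nat => j /andP[jm _].
  by rewrite gtn_eqF.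
have [c1 s1] := IH f1 bf1; rewrite -e2 -c1 -s1.
by split; apply: eq_Rintegral => w _; rewrite e1.
Qed.

Lemma cf_wsum_factorizesS m : (m < n)%N -> cf_wsum_factorizes m ->
  cf_wsum_factorizes m.+1.
Proof.
move=> mn IH f bf.
have bc := bounded_measurable_cosM (th * wt m).
have bs := bounded_measurable_sinM (th * wt m).
have [cc sc] := cf_wsum_factorizes_cons mn IH bc bf.
have [cs ss] := cf_wsum_factorizes_cons mn IH bs bf.
have wsumS w : th * wsum m.+1 w = th * wsum m w + th * wt m * L m w.
  by rewrite /wsum big_ord_recr /= addrA mulrDr mulrA.
set Pf := \prod_(m.+1 <= j < n) _ in cc sc cs ss *.
set F := fun w => \prod_(m.+1 <= j < n) f j (L j w) in cc sc cs ss *.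
have bF : bounded_measurable F.
  by apply: bounded_measurable_prod => j; exact: bounded_measurable_comp.
have bcF := bounded_measurableM (bounded_measurable_comp bc (mL m)) bF.
have bsF := bounded_measurableM (bounded_measurable_comp bs (mL m)) bF.
have bcw := bounded_measurable_comp (bounded_measurable_cosM th)
  (measurable_wsum m).
have bsw := bounded_measurable_comp (bounded_measurable_sinM th)
  (measurable_wsum m).
rewrite /= /cf_cos /cf_sin; split.
  transitivity (mean (fun w =>
      cos (th * wsum m w) * (cos (th * wt m * L m w) * F w) -
      sin (th * wsum m w) * (sin (th * wt m * L m w) * F w))).
    by apply: eq_Rintegral => w _; rewrite wsumS cosD /F /=; ring.
  by rewrite meanB ?cc ?ss; [ring | exact: bounded_measurableM ..].
transitivity (mean (fun w =>
    sin (th * wsum m w) * (cos (th * wt m * L m w) * F w) +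
    cos (th * wsum m w) * (sin (th * wt m * L m w) * F w))).
  by apply: eq_Rintegral => w _; rewrite wsumS sinD /F /=; ring.
by rewrite meanD ?sc ?cs; [ring | exact: bounded_measurableM ..].
Qed.

Lemma cf_wsum_factorizes_all m : (m <= n)%N -> cf_wsum_factorizes m.
Proof.
elim: m => [_|m IH mn]; first exact: cf_wsum_factorizes0.
exact: cf_wsum_factorizesS (IH (ltnW mn)).
Qed.

Lemma cf_wsum :
  mean (fun w => cos (th * wsum n w)) = (cf_prod n).1 /\
  mean (fun w => sin (th * wsum n w)) = (cf_prod n).2.
Proof.
have [] := cf_wsum_factorizes_all (leqnn n) (fun=> bounded_measurable_cst 1).
rewrite !big_geq// !mulr1 => <- <-.
by split; apply: eq_Rintegral => w _; rewrite mulr1.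
Qed.

End weighted_sum_cf.

Lemma sum_powR_norm_scale (R : realType) (n : nat) (al s th : R)
    (w : nat -> R) :
  al != 0 -> 0 <= s -> (forall j, 0 <= w j) ->
  \sum_(j < n) `|s * (th * w j)| `^ al =
  `|s * (\sum_(j < n) w j `^ al) `^ al^-1 * th| `^ al.
Proof.
move=> al0 s0 w0; set W := \sum_(j < n) w j `^ al.
have W0 : 0 <= W by apply: sumr_ge0 => j _; exact: powR_ge0.
have st0 : 0 <= s * `|th| by rewrite mulr_ge0.
have -> : `|s * W `^ al^-1 * th| = s * `|th| * W `^ al^-1.
  by rewrite !normrM (ger0_norm s0) ger0_norm ?powR_ge0//; ring.
under eq_bigr => j _ do
  rewrite normrM normrM (ger0_norm s0) (ger0_norm (w0 j)) mulrA powRM//.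
by rewrite -mulr_sumr powRM ?powR_ge0// -powRrM mulVf// powRr1.
Qed.

Section stable_wsum.
Context {d : measure_display} {T : measurableType d} {R : realType}.
Variable P : probability T R.
Variables (n : nat) (L : nat -> T -> R) (c0 : R) (wt : nat -> R).
Variables (al be sg mu : R).
Hypotheses (indep : mutually_independent P n L)
  (mL : forall i, measurable_fun setT (L i))
  (L_stable : forall j, (j < n)%N -> stable_law P (L j) al be sg mu).

Local Notation re x := (stable_cf_re al be sg mu x).
Local Notation im x := (stable_cf_im_arg al be sg mu x).

Lemma cf_cos_stable th j : (j < n)%N ->
  cf_cos P L th wt j = re (th * wt j) * cos (im (th * wt j)).
Proof.
move=> jn; have [_ _ _ _ /(_ (th * wt j))[+ _]] := L_stable jn.
rewrite expectation_bounded; last first.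
  exact: bounded_measurable_comp (bounded_measurable_cosM _) (mL j).
by case.
Qed.

Lemma cf_sin_stable th j : (j < n)%N ->
  cf_sin P L th wt j = re (th * wt j) * sin (im (th * wt j)).
Proof.
move=> jn; have [_ _ _ _ /(_ (th * wt j))[_]] := L_stable jn.
rewrite expectation_bounded; last first.
  exact: bounded_measurable_comp (bounded_measurable_sinM _) (mL j).
by case.
Qed.

Lemma cf_prod_stable th m : (m <= n)%N ->
  let phase := th * c0 + \sum_(j < m) im (th * wt j) in
  cf_prod P L c0 th wt m = (\prod_(j < m) re (th * wt j) * cos phase,
                            \prod_(j < m) re (th * wt j) * sin phase).
Proof.
elim: m => [_|m IH mn] /=; first by rewrite !big_ord0 addr0 !mul1r.
rewrite IH ?(ltnW mn)//= cf_cos_stable// cf_sin_stable//.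
rewrite !big_ord_recr /= addrA [cos (_ + im _)]cosD [sin (_ + im _)]sinD.
by congr (_, _); ring.
Qed.

Lemma stable_law_wsum : (0 < n)%N -> al != 1 -> (forall j, 0 < wt j) ->
  stable_law P (wsum L c0 wt n) al be (sg * (\sum_(j < n) wt j `^ al) `^ al^-1)
    (c0 + mu * \sum_(j < n) wt j).
Proof.
move=> n0 al1 wt0; have [hal hbe sg0 _ _] := L_stable n0.
have al0 : al != 0 by case/andP: hal => /gt_eqF ->.
have W0 : 0 < \sum_(j < n) wt j `^ al.
  rewrite -(prednK n0) big_ord_recl ltr_pwDl ?powR_gt0//.
  by apply: sumr_ge0 => j _; exact: powR_ge0.
split => //; [by rewrite mulr_gt0// powR_gt0 | exact: measurable_wsum |].
move=> th.
have [cw sw] := cf_wsum c0 th wt indep mL.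
rewrite cf_prod_stable //= in cw sw.
have ere : \prod_(j < n) re (th * wt j) = stable_cf_re al be
    (sg * (\sum_(j < n) wt j `^ al) `^ al^-1) (c0 + mu * \sum_(j < n) wt j) th.
  rewrite /stable_cf_re !al1 -expR_sum sumrN sum_powR_norm_scale// ?ltW//.
  by move=> j; exact: ltW.
have eim : th * c0 + \sum_(j < n) im (th * wt j) = stable_cf_im_arg al be
    (sg * (\sum_(j < n) wt j `^ al) `^ al^-1) (c0 + mu * \sum_(j < n) wt j) th.
  rewrite /stable_cf_im_arg al1 -sum_powR_norm_scale// ?ltW//; last first.
    by move=> j; exact: ltW.
  rewrite !mulr_suml !mulrDr !mulr_sumr -addrA -big_split /=; congr (_ + _).
  by apply: eq_bigr => j _; rewrite sgrM (gtr0_sg (wt0 j)); ring.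
rewrite !expectation_bounded ?cw ?sw ?ere ?eim//.
- exact: bounded_measurable_comp (bounded_measurable_sinM _)
    (measurable_wsum _ _ _ _).
- exact: bounded_measurable_comp (bounded_measurable_cosM _)
    (measurable_wsum _ _ _ _).
Qed.

End stable_wsum.

Lemma divr_gt0_same_sign (R : realFieldType) (c x y : R) :
  0 < x * c -> 0 < y * c -> 0 < x / y.
Proof.
move=> xc yc; have c0 : c != 0 by apply: contraTneq xc => ->; rewrite mulr0 ltxx.
have y0 : y != 0 by apply: contraTneq yc => ->; rewrite mul0r ltxx.
by rewrite (_ : x / y = (x * c) / (y * c)) ?divr_gt0//; field; rewrite c0 y0.
Qed.

(* Weighted AM-GM with weights a/(a+1) and 1/(a+1), applied to z/a and 1. *)
Lemma powR_weighted_amgm (R : realType) (a z : R) : 0 < a -> 0 < z ->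
  (a + 1) * (z / a) `^ (a / (a + 1)) <= z + 1.
Proof.
move=> a0 z0; have a10 : 0 < a + 1 by lra.
have := @conjugate_powR R ((z / a) `^ (a / (a + 1))) 1 ((a + 1) / a) (a + 1)
  (powR_ge0 _ _) ler01 (divr_gt0 a10 a0) a10.
rewrite invf_div (_ : a / (a + 1) + (a + 1)^-1 = 1); last by field; rewrite gt_eqF.
move=> /(_ erefl); rewrite mulr1 powR1 -powRrM.
rewrite (_ : a / (a + 1) * ((a + 1) / a) = 1); last by field; rewrite !gt_eqF.
rewrite powRr1 => [h|]; last by rewrite divr_ge0// ltW.
rewrite -ler_pdivlMl//; apply: (le_trans h).
by rewrite le_eqVlt; apply/orP; left; apply/eqP; field; rewrite !gt_eqF.
Qed.

Section lower_bound_weights.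
Context {R : realType} (mu : R).
Hypothesis mu0 : mu != 0.

Definition emu (i : nat) : R := expR (mu * i%:R).

(* Weight of the return of period j.+1 in log Z_k, and location of log Z_k. *)
Definition lb_weight k j := 1 - (emu (k - j.+1) - 1) / (emu k - 1).
Definition lb_loc k := mu + ln ((emu k - 1) / (expR mu - 1)).

Lemma emu0 : emu 0 = 1. Proof. by rewrite /emu mulr0 expR0. Qed.

Lemma emuS i : emu i.+1 = expR mu * emu i.
Proof. by rewrite /emu -addn1 natrD mulrDr mulr1 expRD mulrC. Qed.

Lemma emu_sub_mul_gt0 (i j : nat) : (i < j)%N -> 0 < (emu j - emu i) * mu.
Proof.
move=> ij; have ij' : (i%:R : R) < j%:R by rewrite ltr_nat.
have [m0|m0|m0] := ltgtP mu 0; last by move: mu0; rewrite m0 eqxx.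
  have : emu j < emu i by rewrite /emu ltr_expR; nra.
  by move=> h; nra.
have : emu i < emu j by rewrite /emu ltr_expR; nra.
by move=> h; nra.
Qed.

Lemma emu_sub1_mul_gt0 i : (0 < i)%N -> 0 < (emu i - 1) * mu.
Proof. by move=> i0; have := emu_sub_mul_gt0 i0; rewrite emu0. Qed.

Lemma emu_sub1_neq0 i : (0 < i)%N -> emu i - 1 != 0.
Proof.
by move=> i0; apply: contraTneq (emu_sub1_mul_gt0 i0) => ->; rewrite mul0r ltxx.
Qed.

Lemma expR_sub1_neq0 : expR mu - 1 != 0.
Proof. by have := emu_sub1_neq0 (ltn0Sn 0); rewrite /emu mulr1. Qed.

Lemma lb_weight_gt0 k j : (0 < k)%N -> 0 < lb_weight k j.
Proof.
move=> k0; rewrite /lb_weight; have [jk|kj] := ltnP j k; last first.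
  by rewrite (_ : k - j.+1 = 0)%N ?emu0 ?subrr ?mul0r ?subr0//; apply/eqP;
    rewrite subn_eq0 ltnW.
rewrite (_ : 1 - _ = (emu k - emu (k - j.+1)) / (emu k - 1)); last first.
  by field; exact: emu_sub1_neq0.
apply: (divr_gt0_same_sign (c := mu)); last exact: emu_sub1_mul_gt0.
by apply: emu_sub_mul_gt0; rewrite ltn_subrL.
Qed.

Lemma expR_lb_loc k : (0 < k)%N ->
  expR (lb_loc k) = expR mu * ((emu k - 1) / (expR mu - 1)).
Proof.
move=> k0; rewrite /lb_loc expRD lnK// posrE.
apply: (divr_gt0_same_sign (c := mu)); first exact: emu_sub1_mul_gt0.
by have := emu_sub1_mul_gt0 (ltn0Sn 0); rewrite /emu mulr1.
Qed.

Lemma expR_lb_loc_add1 k : (0 < k)%N ->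
  expR (lb_loc k) + 1 = (emu k.+1 - 1) / (expR mu - 1).
Proof.
by move=> k0; rewrite expR_lb_loc// emuS; field; exact: expR_sub1_neq0.
Qed.

Lemma ln_expR_lb_loc_add1 k : (0 < k)%N ->
  ln (expR (lb_loc k) + 1) = lb_loc k.+1 - mu.
Proof. by move=> k0; rewrite expR_lb_loc_add1// [lb_loc k.+1]/lb_loc; ring. Qed.

Lemma lb_weightS k j : (0 < k)%N -> (j < k)%N ->
  expR (lb_loc k) / (expR (lb_loc k) + 1) * lb_weight k j = lb_weight k.+1 j.
Proof.
move=> k0 jk; rewrite expR_lb_loc_add1// expR_lb_loc// /lb_weight subSS.
rewrite -(subnSK jk) !emuS.
have := emu_sub1_neq0 k0; have := emu_sub1_neq0 (ltn0Sn k); rewrite emuS.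
by move=> h1 h2; field; rewrite h1 h2 expR_sub1_neq0.
Qed.

Lemma lb_weight_last k : lb_weight k.+1 k = 1.
Proof. by rewrite /lb_weight subnn emu0 subrr mul0r subr0. Qed.

Lemma sum_lb_weightS k (F : nat -> R) : (0 < k)%N ->
  \sum_(j < k.+1) lb_weight k.+1 j * F j =
  expR (lb_loc k) / (expR (lb_loc k) + 1) * \sum_(j < k) lb_weight k j * F j
  + F k.
Proof.
move=> k0; rewrite big_ord_recr /= lb_weight_last mul1r mulr_sumr; congr (_ + _).
by apply: eq_bigr => j _; rewrite -(lb_weightS k0 (ltn_ord j)) mulrA.
Qed.

Lemma sum_lb_weight_powR k al : (0 < k)%N ->
  \sum_(j < k) lb_weight k j `^ al =
  1 + \sum_(1 <= j < k) (1 - (emu j - 1) / (emu k - 1)) `^ al.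
Proof.
move=> k0; transitivity (\sum_(0 <= i < k) (1 - (emu i - 1) / (emu k - 1)) `^ al).
  by rewrite big_rev_mkord subn0.
by rewrite big_ltn// emu0 subrr mul0r subr0 powR1.
Qed.

End lower_bound_weights.

Section regular_investing.
Context {d : measure_display} {T : measurableType d} {R : realType}.
Variables (P : probability T R) (X : R -> T -> R) (alpha beta sigma mu : R).
Variable a : nat -> R.
Hypotheses (hX : stable_wealth_process P X alpha beta sigma mu)
  (alpha1 : alpha != 1) (mu0 : mu != 0)
  (a_gt0 : forall k, (1 <= k)%N -> 0 < a k)
  (a_loc : forall k, (1 <= k)%N -> forall s m,
     stable_law P (fun w => ln (Zlow X (fun j => j%:R) (fun _ => 1) a k w))
       alpha beta s m -> a k = expR m).

Local Notation Z := (Zlow X (fun j => j%:R) (fun _ => 1) a).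
Local Notation Y := (Ywealth X (fun j => j%:R) (fun _ => 1)).

Definition log_return (j : nat) w := ln (X j.+1%:R w) - ln (X j%:R w).

Lemma X_gt0 (j : nat) w : 0 < X j%:R w.
Proof. by case: hX => h _ _ _ _; exact: (h _ (ler0n _ j)).2. Qed.

Lemma gross_return_gt0 (j : nat) w : 0 < X j.+1%:R w / X j%:R w.
Proof. by rewrite divr_gt0// X_gt0. Qed.

Lemma ln_gross_return (j : nat) w : ln (X j.+1%:R w / X j%:R w) = log_return j w.
Proof. by rewrite lnM ?posrE ?invr_gt0 ?X_gt0// lnV// posrE X_gt0. Qed.

Lemma measurable_log_return j : measurable_fun setT (log_return j).
Proof.
have mX (i : nat) : measurable_fun setT (X i%:R).
  by case: hX => h _ _ _ _; exact: (h _ (ler0n _ i)).1.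
by apply: measurable_funB; apply: measurableT_comp => //; exact: measurable_ln.
Qed.

Lemma log_return_independent k : mutually_independent P k log_return.
Proof.
case: hX => _ _ _ h _; apply: (h k (fun i => i%:R)) => // i _.
by rewrite ltr_nat.
Qed.

Lemma log_return_stable j : stable_law P (log_return j) alpha beta sigma mu.
Proof.
case: hX => _ _ _ _ /(_ j%:R j.+1%:R (ler0n _ j)); rewrite ltr_nat ltnSn.
rewrite -natrB// subSnn powR1 !mulr1 => /(_ isT).
by under eq_fun do rewrite ln_gross_return.
Qed.

Definition log_Zlow_affine k := forall w, 0 < Z k.+1 w /\
  ln (Z k.+1 w) =
  lb_loc mu k.+1 + \sum_(j < k.+1) lb_weight mu k.+1 j * (log_return j w - mu).

Lemma stable_log_Zlow k : log_Zlow_affine k ->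
  stable_law P (fun w => ln (Z k.+1 w)) alpha beta
    (sigma * (\sum_(j < k.+1) lb_weight mu k.+1 j `^ alpha) `^ alpha^-1)
    (lb_loc mu k.+1).
Proof.
move=> hZ; set W := \sum_(j < k.+1) lb_weight mu k.+1 j.
have -> : lb_loc mu k.+1 = (lb_loc mu k.+1 - mu * W) + mu * W by rewrite subrK.
have -> : (fun w => ln (Z k.+1 w)) =
    wsum log_return (lb_loc mu k.+1 - mu * W) (lb_weight mu k.+1) k.+1.
  apply: funext => w; rewrite (hZ w).2 /wsum -[in RHS]addrA.
  congr (lb_loc _ _ + _).
  by rewrite /W mulr_sumr -sumrN -big_split /=; apply: eq_bigr => j _; ring.
apply: stable_law_wsum => //.
- exact: log_return_independent.
- exact: measurable_log_return.
- by move=> j _; exact: log_return_stable.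
- by move=> j; exact: lb_weight_gt0.
Qed.

Lemma a_lb_loc k : log_Zlow_affine k -> a k.+1 = expR (lb_loc mu k.+1).
Proof. by move=> hZ; apply: (a_loc (ltn0Sn k)); exact: stable_log_Zlow. Qed.

Lemma Zlow1 w : Z 1 w = X 1%:R w / X 0%:R w.
Proof. by rewrite /= /gross_return /= add0r mulr1. Qed.

Lemma ZlowSS k w : Z k.+2 w =
  X k.+2%:R w / X k.+1%:R w * (a k.+1 + 1) *
  (Z k.+1 w / a k.+1) `^ bcoef a (fun=> 1) k.+1.
Proof. by []. Qed.

Lemma log_Zlow_affine_all k : log_Zlow_affine k.
Proof.
elim: k => [|k IH] w.
  rewrite Zlow1 gross_return_gt0 ln_gross_return big_ord1 lb_weight_last mul1r.
  rewrite /lb_loc /emu mulr1 divff ?expR_sub1_neq0// ln1 addr0; split => //.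
  by rewrite addrC subrK.
have [Z_gt0 lnZ] := IH w.
set A := expR (lb_loc mu k.+1).
have A0 : 0 < A by exact: expR_gt0.
have g0 := gross_return_gt0 k.+1 w.
have p0 : 0 < (Z k.+1 w / A) `^ (A / (A + 1)) by rewrite powR_gt0// divr_gt0.
have gA0 : 0 < X k.+2%:R w / X k.+1%:R w * (A + 1) by rewrite mulr_gt0//; lra.
rewrite ZlowSS /bcoef (a_lb_loc IH) -/A; split; first exact: mulr_gt0.
rewrite lnM ?posrE// lnM ?posrE//; last by lra.
rewrite ln_powR ln_gross_return lnM ?posrE ?invr_gt0// lnV ?posrE// /A.
rewrite ln_expR_lb_loc_add1// expRK lnZ.
by rewrite [in RHS](sum_lb_weightS mu0 (fun j => log_return j w - mu))//; ring.
Qed.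

Lemma Zlow_le_Ywealth k w : 0 < Z k.+1 w <= Y k.+1 w.
Proof.
elim: k => [|k IH].
  by rewrite (_ : Y 1 w = Z 1 w)// lexx Zlow1 gross_return_gt0.
have [Z_gt0 ZY] := andP IH; have a0 := a_gt0 (ltn0Sn k).
have g0 := gross_return_gt0 k.+1 w.
rewrite ZlowSS (_ : Y k.+2 w = X k.+2%:R w / X k.+1%:R w * (Y k.+1 w + 1))//.
rewrite -mulrA; apply/andP; split.
  by apply: mulr_gt0 => //; apply: mulr_gt0; [lra | exact/powR_gt0/divr_gt0].
rewrite ler_pM2l//; apply: le_trans (powR_weighted_amgm a0 Z_gt0) _; lra.
Qed.

End regular_investing.

Theorem theorem2 (d : measure_display) (T : measurableType d) (R : realType)
  (P : probability T R) (X : R -> T -> R) (alpha beta sigma mu : R)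
  (a : nat -> R) :
  0 < alpha <= 2 -> -1 <= beta <= 1 -> 0 < sigma ->
  stable_wealth_process P X alpha beta sigma mu ->
  alpha != 1 -> mu != 0 ->
  (forall k, (1 <= k)%N -> 0 < a k) ->
  (* a_k = exp(mu_k), mu_k the location parameter of log Z_k *)
  (forall k, (1 <= k)%N -> forall s m,
     stable_law P (fun w => ln (Zlow X (fun j => j%:R) (fun _ => 1) a k w))
       alpha beta s m ->
     a k = expR m) ->
  forall k, (1 <= k)%N ->
    let Y := Ywealth X (fun j => j%:R) (fun _ => 1) k in
    let Z := Zlow X (fun j => j%:R) (fun _ => 1) a k in
    let mu_k := mu + ln ((expR (mu * k%:R) - 1) / (expR mu - 1)) in
    let sigma_k := (sigma `^ alpha *
        (1 + \sum_(1 <= j < k)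
               (1 - (expR (mu * j%:R) - 1) / (expR (mu * k%:R) - 1)) `^ alpha))
        `^ alpha^-1 in
    (\forall w \ae P, Z w <= Y w) /\
    stable_law P (fun w => ln (Z w)) alpha beta sigma_k mu_k.
Proof.
move=> /andP[alpha0 _] _ sigma0 hX alpha1 mu0 a_gt0 a_loc [|k] // _.
move=> Y Z mu_k sigma_k.
split; first by apply: aeW => w; case/andP: (Zlow_le_Ywealth hX a_gt0 k w).
suff -> : sigma_k =
    sigma * (\sum_(j < k.+1) lb_weight mu k.+1 j `^ alpha) `^ alpha^-1.
  exact (stable_log_Zlow hX alpha1 mu0 (log_Zlow_affine_all hX alpha1 mu0 a_loc k)).
rewrite /sigma_k (sum_lb_weight_powR mu)// powRM ?powR_ge0//; last first.
  by rewrite addr_ge0// sumr_ge0// => j _; exact: powR_ge0.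
by rewrite -powRrM mulfV ?gt_eqF// (powRr1 (ltW sigma0)).
Qed.
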